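(* Let $A\subseteq\Gamma^m$ be a non-empty, non-negative definable set and let $f:A\to\Omega$ be a largely continuous definable map. Then $f$ attains a minimum on $A$.
   Context: $\mathcal{Z}$ is a $\mathbb{Z}$-group (linearly ordered abelian group with smallest positive element $1$ and $|\mathcal{Z}/n\mathcal{Z}|=n$ for all $n\geq1$), $\mathcal{Q}$ its divisible hull, $\Gamma=\mathcal{Z}\cup\{+\infty\}$, $\Omega=\mathcal{Q}\cup\{+\infty\}$. $\Omega$ has the topology generated by open intervals and $]a,+\infty]$ ($a\in\mathcal{Q}$); $\Omega^m$ product topology, $\Gamma^m$ induced; $\overline A$ is the closure in $\Omega^m$. Non-negative: all coordinates $\geq0$. $f$ is largely continuous if it extends to a continuous map on $\overline A$. For $I\subseteq\{1,\dots,m\}$, $F_I(\Gamma^m)$ is the set of points whose coordinates different from $+\infty$ are exactly those indexed by $I$, identified with $\mathcal{Z}^{|I|}$. $A\subseteq\Gamma^m$ is definable if each $A\cap F_I(\Gamma^m)$ is first-order definable with parameters in $\mathcal{Z}$ in the Presburger language $\{0,1,+,\leq,(\equiv_n)_{n\geq1}\}$; $f:A\to\Omega$ is definable if for some integer $n\geq1$, $nf$ takes values in $\Gamma$ and on each $A\cap F_I(\Gamma^m)$, $nf$ is either constantly $+\infty$ or a map into $\mathcal{Z}$ with definable graph. *)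

From mathcomp Require Import all_boot all_algebra.
Set Implicit Arguments. Unset Strict Implicit. Unset Printing Implicit Defensive.
Import GRing.Theory.
Local Open Scope ring_scope.

Record oagroup (G : zmodType) (le : G -> G -> Prop) : Prop := {
  oa_refl  : forall x, le x x;
  oa_trans : forall x y z, le x y -> le y z -> le x z;
  oa_anti  : forall x y, le x y -> le y x -> x = y;
  oa_total : forall x y, le x y \/ le y x;
  oa_add   : forall x y z, le x y -> le (x + z) (y + z) }.

(* Z is a Z-group with distinguished element one = 1:
   1 is the smallest positive element and |Z/nZ| = n for all n >= 1
   (witnessed by a bijection between 'I_n and Z/nZ). *)
Record zgroup (Z : zmodType) (le : Z -> Z -> Prop) (one : Z) : Prop := {
  zg_oa      : oagroup le;
  zg_one_pos : le 0 one /\ one <> 0;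
  zg_one_min : forall x, le 0 x -> x <> 0 -> le one x;
  zg_quot    : forall n : nat, (0 < n)%N ->
                 exists r : 'I_n -> Z,
                   forall x : Z, exists! i : 'I_n, exists y : Z, x - r i = y *+ n }.

Record divhull (Z : zmodType) (leZ : Z -> Z -> Prop)
               (Q : zmodType) (leQ : Q -> Q -> Prop) (iota : Z -> Q) : Prop := {
  dh_oa   : oagroup leQ;
  dh_add  : forall x y, iota (x + y) = iota x + iota y;
  dh_le   : forall x y, leZ x y <-> leQ (iota x) (iota y);
  dh_div  : forall (q : Q) (n : nat), (0 < n)%N -> exists r : Q, r *+ n = q;
  dh_tors : forall q : Q, exists n : nat, (0 < n)%N /\ exists z : Z, q *+ n = iota z }.

Definition ltrel (T : Type) (le : T -> T -> Prop) (x y : T) := le x y /\ x <> y.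

(* Gamma = option Z and Omega = option Q, with None standing for +infinity. *)
Definition leO (Q : Type) (leQ : Q -> Q -> Prop) (x y : option Q) : Prop :=
  match x, y with
  | _, None => True
  | None, Some _ => False
  | Some a, Some b => leQ a b
  end.

(* Basic open sets of Omega: open intervals ]a,b[ and rays ]a,+oo] (a,b in Q). *)
Inductive basic (Q : Type) := BInt of Q & Q | BRay of Q.

Definition in_basic (Q : Type) (leQ : Q -> Q -> Prop) (B : basic Q) (y : option Q) : Prop :=
  match B, y with
  | BInt a b, Some q => ltrel leQ a q /\ ltrel leQ q b
  | BInt _ _, None => False
  | BRay a, Some q => ltrel leQ a q
  | BRay _, None => True
  end.

Definition in_box (Q : Type) (leQ : Q -> Q -> Prop) (m : nat)
  (U : 'I_m -> basic Q) (y : 'I_m -> option Q) : Prop :=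
  forall i, in_basic leQ (U i) (y i).

Definition embO (Z Q : Type) (iota : Z -> Q) (m : nat) (x : 'I_m -> option Z) :
  'I_m -> option Q := fun i => omap iota (x i).

Definition in_closure (Z Q : Type) (leQ : Q -> Q -> Prop) (iota : Z -> Q) (m : nat)
  (A : ('I_m -> option Z) -> Prop) (y : 'I_m -> option Q) : Prop :=
  forall U : 'I_m -> basic Q, in_box leQ U y ->
    exists x, A x /\ in_box leQ U (embO iota x).

(* f : A -> Omega is largely continuous: it extends to a map on the closure
   of A which is continuous for the subspace topology. *)
Definition largely_continuous (Z Q : Type) (leQ : Q -> Q -> Prop) (iota : Z -> Q)
  (m : nat) (A : ('I_m -> option Z) -> Prop) (f : ('I_m -> option Z) -> option Q) : Prop :=
  exists g : ('I_m -> option Q) -> option Q,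
    (forall x, A x -> g (embO iota x) = f x) /\
    (forall y, in_closure leQ iota A y ->
       forall V : basic Q, in_basic leQ V (g y) ->
       exists U : 'I_m -> basic Q, in_box leQ U y /\
         forall y', in_closure leQ iota A y' -> in_box leQ U y' ->
           in_basic leQ V (g y')).

Inductive pterm (Z : Type) :=
  | PVar of nat | PConst of Z | PZero | POne | PAdd of pterm Z & pterm Z.

Inductive pform (Z : Type) :=
  | PEq of pterm Z & pterm Z
  | PLe of pterm Z & pterm Z
  | PCong of nat & pterm Z & pterm Z
  | PNot of pform Z
  | PAnd of pform Z & pform Z
  | POr of pform Z & pform Z
  | PEx of nat & pform Z
  | PAll of nat & pform Z.

Section PEval.
Variables (Z : zmodType) (le : Z -> Z -> Prop) (one : Z).

Fixpoint teval (e : nat -> Z) (t : pterm Z) : Z :=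
  match t with
  | PVar i => e i
  | PConst c => c
  | PZero => 0
  | POne => one
  | PAdd t u => teval e t + teval e u
  end.

Definition upd (e : nat -> Z) (i : nat) (z : Z) : nat -> Z :=
  fun j => if j == i then z else e j.

Fixpoint peval (e : nat -> Z) (p : pform Z) : Prop :=
  match p with
  | PEq t u => teval e t = teval e u
  | PLe t u => le (teval e t) (teval e u)
  | PCong n t u => exists y : Z, teval e t - teval e u = y *+ n
  | PNot p => ~ peval e p
  | PAnd p q => peval e p /\ peval e q
  | POr p q => peval e p \/ peval e q
  | PEx i p => exists z : Z, peval (upd e i z) p
  | PAll i p => forall z : Z, peval (upd e i z) p
  end.
End PEval.

Definition in_face (Z : Type) (m : nat) (I : {set 'I_m}) (x : 'I_m -> option Z) : Prop :=
  forall i : 'I_m, isSome (x i) = (i \in I).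

(* Assignment of the variables: variable number i < m gets coordinate i of x
   (this identifies F_I(Gamma^m) with Z^I), all other variables get 0. *)
Definition envx (Z : zmodType) (m : nat) (x : 'I_m -> option Z) : nat -> Z :=
  fun j => match @insub nat (fun k => (k < m)%N) 'I_m j with
           | Some i => odflt 0 (x i)
           | None => 0
           end.

Definition definable_set (Z : zmodType) (le : Z -> Z -> Prop) (one : Z) (m : nat)
  (A : ('I_m -> option Z) -> Prop) : Prop :=
  forall I : {set 'I_m}, exists phi : pform Z,
    forall x, in_face I x -> (A x <-> peval le one (envx x) phi).

Definition nmulO (Q : zmodType) (n : nat) (y : option Q) : option Q := omap (fun q => q *+ n) y.

(* f : A -> Omega is definable: for some n >= 1, n f takes values in Gamma,
   and on each A cap F_I, n f is either constantly +oo or maps into Z with a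
   definable graph (the extra graph coordinate is variable number m). *)
Definition definable_fun (Z : zmodType) (le : Z -> Z -> Prop) (one : Z)
  (Q : zmodType) (iota : Z -> Q) (m : nat)
  (A : ('I_m -> option Z) -> Prop) (f : ('I_m -> option Z) -> option Q) : Prop :=
  exists n : nat, (0 < n)%N /\
    (forall a, A a -> nmulO n (f a) = None \/ exists z, nmulO n (f a) = Some (iota z)) /\
    forall I : {set 'I_m},
      (forall a, A a -> in_face I a -> nmulO n (f a) = None) \/
      ((forall a, A a -> in_face I a -> exists z, nmulO n (f a) = Some (iota z)) /\
       exists phi : pform Z, forall x z, in_face I x ->
         ((A x /\ nmulO n (f x) = Some (iota z)) <-> peval le one (upd (envx x) m z) phi)).

Definition nonneg (Z : zmodType) (le : Z -> Z -> Prop) (m : nat)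
  (A : ('I_m -> option Z) -> Prop) : Prop :=
  forall x, A x -> forall i, match x i with None => True | Some z => le 0 z end.

(* The values of n f form a definable subset V of the Z-group Z.  Z-groups admit
   quantifier elimination in the Presburger language (Cooper's procedure), and the
   eliminated form shows that a non-empty definable subset of Z that is bounded
   below has a least element.  If V is bounded below, a point where n f takes the
   value min V minimises f.  Otherwise the coordinates are fixed one at a time:
   coordinate k goes to the least c such that points of A with k-th coordinate at
   most c still carry arbitrarily small values of f near the previous choices
   (non-negativity of A bounds such c from below), or to +oo if there is no such c.
   The resulting point of the closure of A has points of A with arbitrarily small
   values of f arbitrarily close to it, against the continuity of the extension
   of f there. *)

From mathcomp Require Import all_boot all_algebra.
From Stdlib Require Import Classical ClassicalEpsilon FunctionalExtensionality.
From mathcomp Require Import zify.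
Set Implicit Arguments. Unset Strict Implicit. Unset Printing Implicit Defensive.
Import GRing.Theory.
Local Open Scope ring_scope.

(** * Ordered abelian groups and Z-groups *)

Section OrderedGroup.
Context (G : zmodType) {le : G -> G -> Prop} (leG : oagroup le).

Lemma le_refl x : le x x. Proof. exact: oa_refl leG x. Qed.
Lemma le_trans {x y z} : le x y -> le y z -> le x z. Proof. exact: oa_trans. Qed.
Lemma le_anti {x y} : le x y -> le y x -> x = y. Proof. exact: oa_anti. Qed.
Lemma le_total x y : le x y \/ le y x. Proof. exact: oa_total. Qed.
Lemma le_add2r {x y} z : le x y -> le (x + z) (y + z). Proof. exact: oa_add. Qed.

Lemma le_add2l {x y} z : le x y -> le (z + x) (z + y).
Proof. by rewrite ![z + _]addrC; apply: le_add2r. Qed.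

Lemma le_add2r_cancel {x y z} : le (x + z) (y + z) -> le x y.
Proof. by move=> /(le_add2r (- z)); rewrite !addrK. Qed.

Lemma le_add2l_cancel {x y z} : le (z + x) (z + y) -> le x y.
Proof. by rewrite ![z + _]addrC; apply: le_add2r_cancel. Qed.

Lemma le_add {a b c d} : le a b -> le c d -> le (a + c) (b + d).
Proof. by move=> hab hcd; apply: le_trans (le_add2r c hab) (le_add2l b hcd). Qed.

Lemma subr_ge0 x y : le 0 (y - x) <-> le x y.
Proof.
split=> h; last by have := le_add2r (- x) h; rewrite subrr.
by have := le_add2r x h; rewrite add0r subrK.
Qed.

Lemma le_opp {x y} : le x y -> le (- y) (- x).
Proof. by move=> /subr_ge0 h; apply/subr_ge0; rewrite opprK addrC. Qed.

Lemma le_max2 x y : exists w, le x w /\ le y w.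
Proof. by case: (le_total x y) => h; [exists y|exists x]; split => //; apply: le_refl. Qed.

Lemma le_min2 x y : exists w, le w x /\ le w y.
Proof. by case: (le_total x y) => h; [exists x|exists y]; split => //; apply: le_refl. Qed.

Lemma bound_forall_fin (T : finType) (P : T -> G -> Prop) :
  (forall i b b', le b b' -> P i b -> P i b') -> (forall i, exists b, P i b) ->
  exists b, forall i, P i b.
Proof.
move=> Pmono Pex.
suff [b hb] : exists b, forall i, i \in enum T -> P i b.
  by exists b => i; apply: hb; rewrite mem_enum.
elim: (enum T) => [|i s [b hb]]; first by exists 0.
have [b' hb'] := Pex i; have [c [hbc hb'c]] := le_max2 b b'.
exists c => j; rewrite in_cons => /orP [/eqP ->|hj]; first exact: Pmono hb'c hb'.
exact: Pmono hbc (hb j hj).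
Qed.

Lemma mulrn_ge0 {x} k : le 0 x -> le 0 (x *+ k).
Proof.
move=> x_ge0; elim: k => [|k IH]; first exact: le_refl.
by rewrite mulrS -[0]addr0; apply: le_add.
Qed.

Lemma le_mulrn2r {x y} k : le x y -> le (x *+ k) (y *+ k).
Proof. by move=> /subr_ge0 h; apply/subr_ge0; rewrite -mulrnBl; apply: mulrn_ge0. Qed.

Lemma le_mulrn_self {x k} : le 0 x -> (0 < k)%N -> le x (x *+ k).
Proof.
case: k => // k x_ge0 _; rewrite mulrSr -{1}[x]add0r; apply: le_add2r.
exact: mulrn_ge0.
Qed.

Lemma mulrSn_eq0 {x : G} {k} : x *+ k.+1 = 0 -> x = 0.
Proof.
move=> e; wlog x_ge0 : x e / le 0 x.
  move=> W; case: (le_total 0 x) => h; first exact: W.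
  apply/eqP; rewrite -oppr_eq0; apply/eqP; apply: W; first by rewrite mulNrn e oppr0.
  by move/le_opp: h; rewrite oppr0.
have := le_mulrn_self x_ge0 (isT : (0 < k.+1)%N); rewrite e => h.
exact: le_anti h x_ge0.
Qed.

Lemma mulrSn_inj {x y : G} {k} : x *+ k.+1 = y *+ k.+1 -> x = y.
Proof.
move=> e; apply/eqP; rewrite -subr_eq0; apply/eqP.
by apply: (@mulrSn_eq0 _ k); rewrite mulrnBl e subrr.
Qed.

Lemma le_mulrSn2r {x y k} : le (x *+ k.+1) (y *+ k.+1) -> le x y.
Proof.
move=> h; case: (le_total x y) => // hyx.
by rewrite (mulrSn_inj (le_anti h (le_mulrn2r k.+1 hyx))); apply: le_refl.
Qed.

End OrderedGroup.

Section ZGroup.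
Variables (Z : zmodType) (le : Z -> Z -> Prop) (one : Z).
Hypothesis HZ : zgroup le one.
Let leZ := zg_oa HZ.

Lemma one_ge0 : le 0 one. Proof. exact: (proj1 (zg_one_pos HZ)). Qed.
Lemma one_neq0 : one <> 0. Proof. exact: (proj2 (zg_one_pos HZ)). Qed.

Lemma le_add1 x : le x (x + one).
Proof. by rewrite -{1}[x]addr0; apply: (le_add2l leZ) one_ge0. Qed.

Lemma lt_le_add1 x y : le x y -> x <> y -> le (x + one) y.
Proof.
move=> /(subr_ge0 leZ) h x_neq_y; apply/(subr_ge0 leZ); rewrite opprD addrA.
have : y - x <> 0 by move=> /eqP; rewrite subr_eq0 => /eqP e; exact: x_neq_y (esym e).
by move=> /(zg_one_min HZ h) /(subr_ge0 leZ).
Qed.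

Lemma not_add1_le x : ~ le (x + one) x.
Proof.
rewrite -{2}[x]addr0 => /(le_add2l leZ (- x)); rewrite !addKr => h.
exact: one_neq0 (le_anti leZ h one_ge0).
Qed.

Lemma not_le x y : ~ le x y <-> le (y + one) x.
Proof.
split=> [nxy|hyx hxy]; last exact: not_add1_le (le_trans leZ hyx hxy).
case: (le_total leZ x y) => hyx; first by [].
by apply: lt_le_add1 hyx _ => e; apply: nxy; rewrite e; apply: le_refl.
Qed.

Lemma mulrSn_one_neq0 k : one *+ k.+1 <> 0.
Proof. by move=> /(mulrSn_eq0 leZ); exact: one_neq0. Qed.

Lemma mulrn_one_le0 k : le (one *+ k) 0 -> k = 0%N.
Proof.
case: k => // k h; exfalso.
exact: mulrSn_one_neq0 (le_anti leZ h (mulrn_ge0 leZ _ one_ge0)).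
Qed.

Lemma mulrn_one_ndvd k d w : (0 < k)%N -> (k < d)%N -> one *+ k <> w *+ d.
Proof.
move=> k_gt0 kd e.
have w_ge0 : le 0 w.
  apply: NNPP => /not_le /(le_trans leZ (le_add1 w)) /(le_mulrn2r leZ d).
  by rewrite mul0rn -e => /mulrn_one_le0 k0; rewrite k0 in k_gt0.
have w_neq0 : w <> 0.
  move=> w0; move: k_gt0; rewrite (@mulrn_one_le0 k) // e w0 mul0rn.
  exact: (le_refl leZ).
have : le (one *+ (d - k) + one *+ k) (0 + one *+ k).
  rewrite -mulrnDr subnK ?(ltnW kd) // add0r e.
  exact: (le_mulrn2r leZ) (zg_one_min HZ w_ge0 w_neq0).
by move=> /(le_add2r_cancel leZ) /mulrn_one_le0 /eqP; rewrite subn_eq0 leqNgt kd.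
Qed.

Lemma mulrn_one_cong i j d u :
  (i < d)%N -> (j < d)%N -> one *+ i - one *+ j = u *+ d -> i = j.
Proof.
wlog le_ji : i j u / (j <= i)%N.
  move=> W id jd e; case: (leqP j i) => h; first exact: W e.
  by apply/esym/(W j i (- u)) => //; [exact: ltnW|rewrite mulNrn -e opprB].
move=> id _ e; case: (ltnP j i) => [lt_ji|le_ij]; last by apply/eqP; rewrite eqn_leq le_ij.
exfalso; apply: (@mulrn_one_ndvd (i - j) d u); rewrite ?subn_gt0 //.
  exact: leq_ltn_trans (leq_subr _ _) id.
by rewrite mulrnBr.
Qed.

Lemma zgroup_edivn d x : (0 < d)%N ->
  exists q (r : nat), (r < d)%N /\ x = q *+ d + one *+ r.
Proof.
move=> d_gt0; have [rep hrep] := zg_quot HZ d_gt0.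
have cls y : {i : 'I_d | exists u, y - rep i = u *+ d}.
  by apply: constructive_indefinite_description; have [i [hi _]] := hrep y; exists i.
(* [k |-> class of one *+ k] maps ['I_d] injectively, hence onto, the classes mod [d]. *)
pose g (k : 'I_d) := sval (cls (one *+ k)).
have g_inj : injective g.
  move=> i j e; have [u hu] := svalP (cls (one *+ i)); have [v hv] := svalP (cls (one *+ j)).
  apply/val_inj/(@mulrn_one_cong _ _ d (u - v)); rewrite ?ltn_ord //.
  by rewrite mulrnBl -hu -hv -/(g i) -/(g j) e opprB addrA subrK.
have [g' _ gK] := injF_bij g_inj.
have [i [[u hu] _]] := hrep x.
have [v hv] := svalP (cls (one *+ g' i)); rewrite -/(g (g' i)) gK in hv.
exists (u - v), (g' i); split; first exact: ltn_ord.
by rewrite mulrnBl -hu -hv opprB addrA !subrK.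
Qed.

Lemma edivn_quot_ge0 q r d : (r < d)%N -> le 0 (q *+ d + one *+ r) -> le 0 q.
Proof.
move=> rd h; apply: NNPP => /not_le hq.
have : le (q *+ d + one *+ (d - r) + one *+ r) (q *+ d + 0 + one *+ r).
  rewrite -addrA -mulrnDr subnK ?(ltnW rd) // addr0; apply: (le_trans leZ) h.
  by rewrite -mulrnDl -(mul0rn _ d); apply: (le_mulrn2r leZ).
move=> /(le_add2r_cancel leZ) /(le_add2l_cancel leZ) /mulrn_one_le0 /eqP.
by rewrite subn_eq0 leqNgt rd.
Qed.

(** * Quantifier elimination for Presburger arithmetic *)

Definition env := nat -> Z.

Lemma upd_eq (e : env) i z : upd e i z i = z.
Proof. by rewrite /upd eqxx. Qed.

Lemma upd_neq (e : env) i z j : j != i -> upd e i z j = e j.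
Proof. by rewrite /upd => /negbTE ->. Qed.

Lemma upd_upd (e : env) i z w : upd (upd e i z) i w = upd e i w.
Proof. by apply: functional_extensionality => j; rewrite /upd; case: eqP. Qed.

Lemma upd_comm (e : env) i j z w : i != j -> upd (upd e i z) j w = upd (upd e j w) i z.
Proof.
move=> ne; apply: functional_extensionality => k; rewrite /upd.
case: (eqVneq k j) => hkj; case: (eqVneq k i) => hki //.
by move: ne; rewrite -hki -hkj eqxx.
Qed.

Record aff := Aff {
  aff_fun :> env -> Z;
  aff_coef : nat -> int;
  aff_coefP : forall e x z, aff_fun (upd e x z) = aff_fun (upd e x 0) + z *~ aff_coef x }.

Lemma aff_coef0 (F : aff) e x z : aff_coef F x = 0 -> F (upd e x z) = F (upd e x 0).
Proof. by move=> h; rewrite aff_coefP h mulr0z addr0. Qed.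

Lemma aff_upd_add (F : aff) e x z w :
  F (upd e x (z + w)) = F (upd e x z) + w *~ aff_coef F x.
Proof. by rewrite (aff_coefP F e x (z + w)) (aff_coefP F e x z) mulrzDl addrA. Qed.

Definition aff_const (d : Z) : aff.
Proof. by refine (@Aff (fun _ => d) (fun _ => 0) _) => *; rewrite mulr0z addr0. Defined.

Definition aff_var (i : nat) : aff.
Proof.
refine (@Aff (fun e => e i) (fun x => if x == i then 1 else 0) _).
move=> e x z; case: (eqVneq x i) => [->|ne]; first by rewrite !upd_eq add0r.
by rewrite !upd_neq 1?eq_sym // mulr0z addr0.
Defined.

Definition aff_add (F G : aff) : aff.
Proof.
refine (@Aff (fun e => F e + G e) (fun x => aff_coef F x + aff_coef G x) _).
by move=> e x z; rewrite (aff_coefP F e x z) (aff_coefP G e x z) mulrzDr addrACA.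
Defined.

Definition aff_scale (F : aff) (k : int) : aff.
Proof.
refine (@Aff (fun e => F e *~ k) (fun x => aff_coef F x * k) _).
by move=> e x z; rewrite aff_coefP mulrzDl mulrzA.
Defined.

Definition aff_opp (F : aff) : aff := aff_scale F (-1).

Definition aff_subst (x : nat) (G F : aff) : aff.
Proof.
refine (@Aff (fun e => F (upd e x (G e)))
  (fun y => if y == x then aff_coef G x * aff_coef F x
            else aff_coef F y + aff_coef G y * aff_coef F x) _).
move=> e y z; case: (eqVneq y x) => [->|ne].
  rewrite !upd_upd (aff_coefP F e x (G _)) (aff_coefP F e x (G (upd e x 0))).
  by rewrite (aff_coefP G e x z) mulrzDl mulrzA addrA.
rewrite (aff_coefP G e y z) (aff_coefP F (upd e y z) x) (upd_comm _ _ _ ne).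
rewrite (aff_coefP F (upd e x 0) y z) (aff_coefP F (upd e y 0) x) (upd_comm _ _ _ ne).
rewrite mulrzDl mulrzDr mulrzA -!addrA; congr (_ + _).
by rewrite addrC -!addrA; congr (_ + _); rewrite addrC.
Defined.

Definition aff_drop (x : nat) (F : aff) : aff := aff_subst x (aff_const 0) F.

(* [dvdZ n y] says that [n.+1] divides [y]: moduli are positive by construction. *)
Definition dvdZ (n : nat) (y : Z) := exists u, y = u *+ n.+1.

Lemma dvdZ_addMn n (y u : Z) : dvdZ n y <-> dvdZ n (y + u *+ n.+1).
Proof.
split => [[v ->]|[v h]]; first by exists (v + u); rewrite mulrnDl.
by exists (v - u); rewrite mulrnBl -h addrK.
Qed.

Lemma dvdZ_mulrn n (y : Z) L : (0 < L)%N -> dvdZ (n.+1 * L).-1 (y *+ L) <-> dvdZ n y.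
Proof.
case: L => // L _; rewrite /dvdZ prednK ?muln_gt0 //; split => [[u hu]|[u ->]].
  by exists u; apply: (mulrSn_inj leZ (k := L)); rewrite hu mulrnA.
by exists u; rewrite -mulrnA.
Qed.

Lemma mulrn_mulrz (V : zmodType) (y : V) (L : nat) (c : int) :
  (y *+ L) *~ c = (y *~ c) *+ L.
Proof. by rewrite !pmulrn -!mulrzA mulrC. Qed.

Lemma dvdZ_aff_period n (F : aff) e x z w D : (n.+1 %| D)%N ->
  dvdZ n (F (upd e x z)) <-> dvdZ n (F (upd e x (z + w *+ D))).
Proof.
move=> hD; rewrite aff_upd_add mulrn_mulrz -(divnK hD) mulrnA.
exact: dvdZ_addMn.
Qed.

Lemma pmulrn_ge0 (y : Z) k : (0 < k)%N -> le 0 (y *+ k) <-> le 0 y.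
Proof.
case: k => // k _; split=> [|/(mulrn_ge0 leZ)//].
by move=> h; apply: (le_mulrSn2r leZ (k := k)); rewrite mul0rn.
Qed.

Lemma oppD1_ge0 y : le 0 (- (y + one)) <-> ~ le 0 y.
Proof. by rewrite not_le; split=> /(le_opp leZ); rewrite ?opprK oppr0. Qed.

Inductive atom := ALe of aff | ADvd of nat & aff | ANdvd of nat & aff.
Inductive qf := QTrue | QFalse | QAtom of atom | QAnd of qf & qf | QOr of qf & qf.

Definition atom_sat (e : env) (a : atom) : Prop :=
  match a with
  | ALe F => le 0 (F e)
  | ADvd n F => dvdZ n (F e)
  | ANdvd n F => ~ dvdZ n (F e)
  end.

Fixpoint qf_eval (v : atom -> Prop) (p : qf) : Prop :=
  match p with
  | QTrue => True
  | QFalse => False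
  | QAtom a => v a
  | QAnd p q => qf_eval v p /\ qf_eval v q
  | QOr p q => qf_eval v p \/ qf_eval v q
  end.

Definition qf_sat e p := qf_eval (atom_sat e) p.

Fixpoint atoms (p : qf) : list atom :=
  match p with
  | QAtom a => cons a nil
  | QAnd p q | QOr p q => List.app (atoms p) (atoms q)
  | _ => nil
  end.

Lemma qf_eval_mono (v1 v2 : atom -> Prop) p :
  (forall a, List.In a (atoms p) -> v1 a -> v2 a) -> qf_eval v1 p -> qf_eval v2 p.
Proof.
elim: p => //= [a|p IHp q IHq|p IHp q IHq] h.
- by apply: h; left.
- by case=> h1 h2; split; [apply: IHp h1|apply: IHq h2] => a ha; apply: h;
    apply: List.in_or_app; tauto.
- by case=> h1; [left; apply: IHp h1|right; apply: IHq h1] => a ha; apply: h;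
    apply: List.in_or_app; tauto.
Qed.

Lemma qf_eval_ext (v1 v2 : atom -> Prop) p :
  (forall a, List.In a (atoms p) -> (v1 a <-> v2 a)) -> (qf_eval v1 p <-> qf_eval v2 p).
Proof. by move=> h; split; apply: qf_eval_mono => a ha; have := h a ha; tauto. Qed.

Fixpoint qf_bind (h : atom -> qf) (p : qf) : qf :=
  match p with
  | QAtom a => h a
  | QAnd p q => QAnd (qf_bind h p) (qf_bind h q)
  | QOr p q => QOr (qf_bind h p) (qf_bind h q)
  | QTrue => QTrue
  | QFalse => QFalse
  end.

Lemma qf_eval_bind v h p : qf_eval v (qf_bind h p) <-> qf_eval (fun a => qf_eval v (h a)) p.
Proof. by elim: p => //= [p IHp q IHq|p IHp q IHq]; rewrite IHp IHq. Qed.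

Lemma atoms_bind (h : atom -> qf) p a : List.In a (atoms (qf_bind h p)) ->
  exists b, List.In b (atoms p) /\ List.In a (atoms (h b)).
Proof.
elim: p => //= [b|p IHp q IHq|p IHp q IHq] ha; first by exists b; split => //; left.
all: case: (List.in_app_or _ _ _ ha) => ha';
  [have [b [hb hb']] := IHp ha'|have [b [hb hb']] := IHq ha'];
  by exists b; split => //; apply: List.in_or_app; tauto.
Qed.

Definition atom_map (h : aff -> aff) (a : atom) : atom :=
  match a with
  | ALe F => ALe (h F) | ADvd n F => ADvd n (h F) | ANdvd n F => ANdvd n (h F)
  end.

Definition qf_subst x (G : aff) (p : qf) :=
  qf_bind (fun a => QAtom (atom_map (aff_subst x G) a)) p.

Lemma qf_sat_subst e x G p : qf_sat e (qf_subst x G p) <-> qf_sat (upd e x (G e)) p.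
Proof. by rewrite /qf_sat /qf_subst qf_eval_bind; apply: qf_eval_ext => -[F|n F|n F]. Qed.

Definition atom_neg (a : atom) : qf :=
  match a with
  | ALe F => QAtom (ALe (aff_add (aff_opp F) (aff_const (- one))))
  | ADvd n F => QAtom (ANdvd n F)
  | ANdvd n F => QAtom (ADvd n F)
  end.

Fixpoint qf_neg (p : qf) : qf :=
  match p with
  | QTrue => QFalse
  | QFalse => QTrue
  | QAtom a => atom_neg a
  | QAnd p q => QOr (qf_neg p) (qf_neg q)
  | QOr p q => QAnd (qf_neg p) (qf_neg q)
  end.

Lemma qf_sat_neg e p : qf_sat e (qf_neg p) <-> ~ qf_sat e p.
Proof.
rewrite /qf_sat; elim: p => /= [||[F|n F|n F]|p IHp q IHq|p IHp q IHq] /=; try tauto.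
by rewrite mulrN1z -opprD oppD1_ge0.
Qed.

Fixpoint qf_ors (s : list qf) : qf :=
  match s with nil => QFalse | cons p s => QOr p (qf_ors s) end.

Lemma qf_sat_ors e s : qf_sat e (qf_ors s) <-> exists p, List.In p s /\ qf_sat e p.
Proof.
elim: s => /= [|p s IH]; first by split => // [[p []]].
rewrite /qf_sat /= -/(qf_sat e p) -/(qf_sat e (qf_ors s)) IH; split.
  by case=> [h|[q [hq h]]]; [exists p; split; [left|]|exists q; split; [right|]].
by case=> q [[<-|hq] h]; [left|right; exists q].
Qed.

Definition lcm_list (s : list nat) : nat := foldr lcmn 1%N s.

Lemma lcm_list_gt0 s : (forall k, List.In k s -> (0 < k)%N) -> (0 < lcm_list s)%N.
Proof.
elim: s => //= k s IH h; rewrite lcmn_gt0 (h k (or_introl erefl)) IH //.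
by move=> k' hk'; apply: h; right.
Qed.

Lemma dvdn_lcm_list k s : List.In k s -> (k %| lcm_list s)%N.
Proof.
elim: s => //= k' s IH [<-|h]; first exact: dvdn_lcml.
exact: dvdn_trans (IH h) (dvdn_lcmr _ _).
Qed.

Lemma list_greatest (T : Type) (val : T -> Z) (s : list T) (P : T -> Prop) :
  (exists c, List.In c s /\ P c) ->
  exists c, List.In c s /\ P c /\ forall d, List.In d s -> P d -> le (val d) (val c).
Proof.
elim: s => [[c [[] _]]|c s IH] h.
case: (classic (exists d, List.In d s /\ P d)) => [/IH [c' [hc' [pc' hm]]]|hn].
  case: (classic (P c)) => pc.
    case: (le_total leZ (val c) (val c')) => hcc.
      exists c'; split; [by right|split => //] => d [<-|hd] pd //; exact: hm.
    exists c; split; [by left|split => //] => d [<-|hd] pd; first exact: (le_refl leZ).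
    exact: (le_trans leZ) (hm d hd pd) hcc.
  exists c'; split; [by right|split => //] => d [<-|hd] pd //; exact: hm.
have pc : P c by case: h => d [[<-|hd] pd] //; exfalso; apply: hn; exists d.
exists c; split; [by left|split => //] => d [<-|hd] pd; first exact: (le_refl leZ).
by exfalso; apply: hn; exists d.
Qed.

Lemma list_least (s : list Z) (P : Z -> Prop) : (exists c, List.In c s /\ P c) ->
  exists c, List.In c s /\ P c /\ forall d, List.In d s -> P d -> le c d.
Proof.
move=> /(list_greatest (fun c => - c)) [c [hc [pc hmax]]]; exists c; do 2!split => //.
by move=> d hd pd; have := le_opp leZ (hmax d hd pd); rewrite !opprK.
Qed.

Lemma list_lower_bound (s : list Z) b : exists c, le c b /\ forall u, List.In u s -> le c u.
Proof.
elim: s => [|u s [c [hcb hc]]]; first by exists b; split => //; exact: (le_refl leZ).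
case: (le_total leZ c u) => h; first by exists c; split => // v [<-|hv] //; exact: hc.
exists u; split; first exact: (le_trans leZ) h hcb.
by move=> v [<-|hv]; [exact: (le_refl leZ)|exact: (le_trans leZ) h (hc v hv)].
Qed.

Lemma In_seq0 j D : List.In j (List.seq 0 D) <-> (j < D)%N.
Proof.
rewrite List.in_seq; split => [[_ /ltP] //|/ltP h]; split => //.
exact: PeanoNat.Nat.le_0_l.
Qed.

Section Normalize.
Variable x : nat.

Definition aff_rescale (L c : int) (F : aff) : aff :=
  aff_add (aff_scale (aff_drop x F) L) (aff_scale (aff_var x) c).

Lemma aff_rescaleE (L : nat) c F e z :
  aff_rescale L c F (upd e x (z *+ L)) = (F (upd e x 0) + z *~ c) *+ L.
Proof. by rewrite /= !upd_upd upd_eq -pmulrn mulrn_mulrz mulrnDl. Qed.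

Lemma aff_rescale_coef L c F : aff_coef (aff_rescale L c F) x = c.
Proof. by rewrite /= !eqxx !mul0r add0r mul1r. Qed.

Definition abs_coef1 (F : aff) : nat :=
  if aff_coef F x == 0 then 1%N else `|aff_coef F x|%N.

Definition coef_lcm (p : qf) : nat :=
  lcm_list (List.map (fun a => if a is ALe F then abs_coef1 F else 1%N) (atoms p)).

Lemma coef_lcm_gt0 p : (0 < coef_lcm p)%N.
Proof.
apply: lcm_list_gt0 => k /List.in_map_iff [[F|n F|n F] [<- _]] //.
by rewrite /abs_coef1; case: eqP => // /eqP; rewrite absz_gt0.
Qed.

Lemma abs_coef1_dvd p F : List.In (ALe F) (atoms p) -> (abs_coef1 F %| coef_lcm p)%N.
Proof. by move=> h; apply: dvdn_lcm_list; apply/List.in_map_iff; exists (ALe F). Qed.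

(* Inequalities are scaled so that [x] occurs in them with coefficient [±L], and
   divisibility atoms are scaled by [L]; renaming [L x] to [x], now constrained to
   be a multiple of [L], leaves only coefficients [0] and [±1] in inequalities. *)
Definition atom_normalize (L : nat) (a : atom) : atom :=
  match a with
  | ALe F => if aff_coef F x == 0 then ALe F
             else ALe (aff_rescale (L %/ `|aff_coef F x|)%N (sgz (aff_coef F x)) F)
  | ADvd n F => ADvd (n.+1 * L).-1 (aff_rescale L (aff_coef F x) F)
  | ANdvd n F => ANdvd (n.+1 * L).-1 (aff_rescale L (aff_coef F x) F)
  end.

Definition normalize (p : qf) : qf :=
  QAnd (QAtom (ADvd (coef_lcm p).-1 (aff_var x)))
       (qf_bind (fun a => QAtom (atom_normalize (coef_lcm p) a)) p).

Lemma atom_normalize_sat p e z a : List.In a (atoms p) ->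
  atom_sat (upd e x z) a <->
  atom_sat (upd e x (z *+ coef_lcm p)) (atom_normalize (coef_lcm p) a).
Proof.
have L_gt0 := coef_lcm_gt0 p.
case: a => [F|n F|n F] ha /=; last 2 first.
- by move: (aff_rescaleE (coef_lcm p) (aff_coef F x) F e z) => /= ->;
    rewrite dvdZ_mulrn // -aff_coefP.
- by move: (aff_rescaleE (coef_lcm p) (aff_coef F x) F e z) => /= ->;
    rewrite dvdZ_mulrn // -aff_coefP.
case: eqP => [c0|/eqP c0]; first by rewrite /= !(aff_coef0 e _ c0).
have := abs_coef1_dvd ha; rewrite /abs_coef1 (negbTE c0) => hd.
set k := (coef_lcm p %/ `|aff_coef F x|)%N.
have hk : (`|aff_coef F x| * k)%N = coef_lcm p by rewrite mulnC divnK.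
have k_gt0 : (0 < k)%N by move: L_gt0; rewrite -hk muln_gt0 => /andP [].
rewrite /= !upd_upd upd_eq -pmulrn aff_coefP.
have -> : (z *+ coef_lcm p) *~ sgz (aff_coef F x) = (z *~ aff_coef F x) *+ k.
  rewrite -hk !pmulrn -!mulrzA; congr (_ *~ _).
  by rewrite PoszM [LHS]mulrC mulrA -intEsg.
by rewrite -mulrnDl pmulrn_ge0.
Qed.

Lemma normalize_sat p e z :
  qf_sat (upd e x z) p <-> qf_sat (upd e x (z *+ coef_lcm p)) (normalize p).
Proof.
rewrite /qf_sat /normalize /= qf_eval_bind /=; split.
  move=> h; split; first by exists z; rewrite upd_eq prednK ?coef_lcm_gt0.
  by move: h; apply: qf_eval_mono => a ha /(atom_normalize_sat e z ha).
by case=> _; apply: qf_eval_mono => a ha /(atom_normalize_sat e z ha).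
Qed.

Lemma normalize_sol_mult p e y :
  qf_sat (upd e x y) (normalize p) -> exists z, y = z *+ coef_lcm p.
Proof. by move=> [[z]]; rewrite /= upd_eq prednK ?coef_lcm_gt0 // => ->; exists z. Qed.

Lemma exists_normalize p e :
  (exists z, qf_sat (upd e x z) p) <-> (exists y, qf_sat (upd e x y) (normalize p)).
Proof.
split=> [[z hz]|[y hy]]; first by exists (z *+ coef_lcm p); rewrite -normalize_sat.
by have [z ez] := normalize_sol_mult hy; exists z; rewrite normalize_sat -ez.
Qed.

Definition unit_coefs (q : qf) := forall F, List.In (ALe F) (atoms q) ->
  aff_coef F x = 0 \/ aff_coef F x = 1 \/ aff_coef F x = -1.

Lemma normalize_unit_coefs p : unit_coefs (normalize p).
Proof.
move=> F /= [//|/atoms_bind [[G|n G|n G] [_ /=]]] [] // hb.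
case: eqP hb => /= [c0 [] <-|/eqP c0 [] <-]; first by left.
rewrite aff_rescale_coef.
by case: (Num.Theory.ltrgt0P (aff_coef G x)) c0 => h c0;
  [right; left; apply: gtr0_sgz|right; right; apply: ltr0_sgz|].
Qed.

End Normalize.

Section Cooper.
Variable x : nat.

Definition lower_of (F : aff) : aff := aff_opp (aff_drop x F).
Definition upper_of (F : aff) : aff := aff_drop x F.

Definition lower_bounds (q : qf) : list aff := List.flat_map (fun a =>
  if a is ALe F then (if aff_coef F x == 1 then cons (lower_of F) nil else nil) else nil)
  (atoms q).
Definition upper_bounds (q : qf) : list aff := List.flat_map (fun a =>
  if a is ALe F then (if aff_coef F x == -1 then cons (upper_of F) nil else nil) else nil)
  (atoms q).

Definition mod_lcm (q : qf) : nat := lcm_list (List.map (fun a =>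
  match a with ADvd n _ | ANdvd n _ => n.+1 | _ => 1%N end) (atoms q)).

Definition atom_minf (a : atom) : qf :=
  match a with
  | ALe F => if aff_coef F x == 1 then QFalse
             else if aff_coef F x == -1 then QTrue else QAtom a
  | _ => QAtom a
  end.
Definition qf_minf (q : qf) := qf_bind atom_minf q.

Lemma lower_atom_sat F e z : aff_coef F x = 1 ->
  atom_sat (upd e x z) (ALe F) <-> le (lower_of F e) z.
Proof.
by move=> c1; rewrite /= mulrN1z (aff_coefP F e x z) c1 mulr1z -(subr_ge0 leZ (- _) z) opprK addrC.
Qed.

Lemma upper_atom_sat F e z : aff_coef F x = -1 ->
  atom_sat (upd e x z) (ALe F) <-> le z (upper_of F e).
Proof. by move=> c1; rewrite /= (aff_coefP F e x z) c1 mulrN1z -(subr_ge0 leZ z). Qed.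

Lemma in_lower_bounds q F : List.In (ALe F) (atoms q) -> aff_coef F x = 1 ->
  List.In (lower_of F) (lower_bounds q).
Proof.
by move=> h c1; apply/List.in_flat_map; exists (ALe F); rewrite c1 eqxx; split; last left.
Qed.

Lemma in_upper_bounds q F : List.In (ALe F) (atoms q) -> aff_coef F x = -1 ->
  List.In (upper_of F) (upper_bounds q).
Proof.
by move=> h c1; apply/List.in_flat_map; exists (ALe F); rewrite c1 eqxx; split; last left.
Qed.

Lemma mod_lcm_gt0 q : (0 < mod_lcm q)%N.
Proof. by apply: lcm_list_gt0 => k /List.in_map_iff [[F|n F|n F] [<-]]. Qed.

Lemma dvdn_mod_lcm q n F :
  List.In (ADvd n F) (atoms q) \/ List.In (ANdvd n F) (atoms q) -> (n.+1 %| mod_lcm q)%N.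
Proof.
by case=> h; apply: dvdn_lcm_list; apply/List.in_map_iff; [exists (ADvd n F)|exists (ANdvd n F)].
Qed.

Section UnitCoefs.
Variables (q : qf) (e : env).
Hypothesis hq : unit_coefs x q.

Lemma qf_minf_of_sat z : (forall l, List.In l (lower_bounds q) -> ~ le (l e) z) ->
  qf_sat (upd e x z) q -> qf_sat (upd e x z) (qf_minf q).
Proof.
move=> hl; rewrite /qf_sat /qf_minf qf_eval_bind; apply: qf_eval_mono => -[F|n F|n F] ha //.
rewrite /atom_minf; case: eqP => [c1|_]; last by case: eqP.
by move/(lower_atom_sat e z c1) => h; exfalso; exact: hl _ (in_lower_bounds ha c1) h.
Qed.

Lemma qf_sat_of_minf z : (forall u, List.In u (upper_bounds q) -> le z (u e)) ->
  qf_sat (upd e x z) (qf_minf q) -> qf_sat (upd e x z) q.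
Proof.
move=> hu; rewrite /qf_sat /qf_minf qf_eval_bind; apply: qf_eval_mono => -[F|n F|n F] ha //.
rewrite /atom_minf; case: eqP => [c1|_] //; case: eqP => [c1 _|_] //.
by apply/(upper_atom_sat e z c1); apply: hu; apply: in_upper_bounds.
Qed.

Lemma qf_minf_periodic z w :
  qf_sat (upd e x z) (qf_minf q) <-> qf_sat (upd e x (z + w *+ mod_lcm q)) (qf_minf q).
Proof.
rewrite /qf_sat /qf_minf !qf_eval_bind; apply: qf_eval_ext => -[F|n F|n F] ha.
- rewrite /atom_minf; case: eqP => [//|c1]; case: eqP => [//|c2].
  have c0 : aff_coef F x = 0 by case: (hq ha) => [|[]].
  by rewrite /= !(aff_coef0 _ _ c0).
- by apply: dvdZ_aff_period; apply: (dvdn_mod_lcm (F := F)); left.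
- by rewrite /= -dvdZ_aff_period //; apply: (dvdn_mod_lcm (F := F)); right.
Qed.

Lemma qf_minf_unbounded z : qf_sat (upd e x z) (qf_minf q) ->
  forall b, exists z', le z' b /\ qf_sat (upd e x z') q.
Proof.
move=> hz b.
have [m0 [hm0b hm0]] := list_lower_bound (List.map (fun u : aff => u e) (upper_bounds q)) b.
have hsat z' : le z' m0 -> qf_sat (upd e x z') (qf_minf q) -> qf_sat (upd e x z') q.
  move=> hz'm0; apply: qf_sat_of_minf => u hu; apply: (le_trans leZ) hz'm0 (hm0 _ _).
  by apply/List.in_map_iff; exists u.
case: (classic (le z m0)) => [hzm0|/not_le hm0z].
  by exists z; split; [exact: (le_trans leZ) hzm0 hm0b|exact: hsat].
have d_ge0 : le 0 (z - m0) by apply/(subr_ge0 leZ); apply: (le_trans leZ) (le_add1 m0) hm0z.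
pose z' := z + (- (z - m0)) *+ mod_lcm q.
have hz'm0 : le z' m0.
  have := le_add2l leZ z (le_opp leZ (le_mulrn_self leZ d_ge0 (mod_lcm_gt0 q))).
  by rewrite /z' mulNrn opprB (addrC z (m0 - z)) subrK.
exists z'; split; first exact: (le_trans leZ) hz'm0 hm0b.
by apply: hsat => //; rewrite -qf_minf_periodic.
Qed.

Lemma qf_sat_shift_down y z w :
  (forall l, List.In l (lower_bounds q) -> le (l e) z -> le (l e) y) ->
  le y z -> y = z + w *+ mod_lcm q ->
  qf_sat (upd e x z) q -> qf_sat (upd e x y) q.
Proof.
move=> hlow hyz ey; rewrite /qf_sat; apply: qf_eval_mono => -[F|n F|n F] ha.
- case: (hq ha) => [c0|[c1|c1]]; first by rewrite /= !(aff_coef0 _ _ c0).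
    by move/(lower_atom_sat e z c1) => h; apply/(lower_atom_sat e _ c1); apply: hlow h;
      apply: in_lower_bounds.
  by move/(upper_atom_sat e z c1) => h; apply/(upper_atom_sat e _ c1); exact: (le_trans leZ) hyz h.
- by rewrite /= ey -dvdZ_aff_period //; apply: (dvdn_mod_lcm (F := F)); left.
- by rewrite /= ey -dvdZ_aff_period //; apply: (dvdn_mod_lcm (F := F)); right.
Qed.

(* Cooper's theorem: a solution either survives at -oo, or can be moved down
   to one of finitely many test points [l + j] with [l] a lower bound. *)
Lemma cooper_witness z : qf_sat (upd e x z) q ->
  qf_sat (upd e x z) (qf_minf q) \/
  exists l j, List.In l (lower_bounds q) /\ (j < mod_lcm q)%N /\
              le (l e + one *+ j) z /\ qf_sat (upd e x (l e + one *+ j)) q.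
Proof.
move=> hz.
case: (classic (exists l, List.In l (lower_bounds q) /\ le (l e) z)) => [hex|hn]; last first.
  by left; apply: qf_minf_of_sat => // l hl h; apply: hn; exists l.
right; have [l0 [hl0 [hl0z hmax]]] := list_greatest (fun l : aff => l e) hex.
have [k [j [hj ez]]] := zgroup_edivn (z - l0 e) (mod_lcm_gt0 q).
have k_ge0 : le 0 k by apply: (edivn_quot_ge0 hj); rewrite -ez (subr_ge0 leZ).
have ey : l0 e + one *+ j = z + (- k) *+ mod_lcm q.
  by rewrite mulNrn -[z](subrK (l0 e)) ez addrAC (addrAC (k *+ _)) subrr add0r addrC.
have hyz : le (l0 e + one *+ j) z.
  rewrite ey -{2}[z]addr0 mulNrn; apply: (le_add2l leZ); rewrite -oppr0.
  exact: (le_opp leZ) (mulrn_ge0 leZ _ k_ge0).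
exists l0, j; do 3!split => //.
apply: qf_sat_shift_down hyz ey hz => l hl hlz.
apply: (le_trans leZ) (hmax _ hl hlz) _; rewrite -{1}[l0 e]addr0.
exact: (le_add2l leZ) (mulrn_ge0 leZ _ one_ge0).
Qed.

Definition cooper_points : list Z := List.flat_map (fun l : aff =>
  List.map (fun j => l e + one *+ j) (List.seq 0 (mod_lcm q))) (lower_bounds q).

Lemma below_cooper_point b y : (forall z, qf_sat (upd e x z) q -> le b z) ->
  qf_sat (upd e x y) q ->
  exists c, List.In c cooper_points /\ le c y /\ qf_sat (upd e x c) q.
Proof.
move=> hb hy; case: (cooper_witness hy) => [hm|[l [j [hl [hj [hle h]]]]]].
  have [z' [hz' h']] := qf_minf_unbounded hm (b - one).
  have := le_add2r leZ one (le_trans leZ (hb _ h') hz'); rewrite subrK.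
  by move=> /not_add1_le.
exists (l e + one *+ j); split => //; apply/List.in_flat_map; exists l; split => //.
by apply/List.in_map_iff; exists j; split => //; apply/In_seq0.
Qed.

Lemma unit_coefs_least_sol b : (forall z, qf_sat (upd e x z) q -> le b z) ->
  (exists z, qf_sat (upd e x z) q) ->
  exists z0, qf_sat (upd e x z0) q /\ forall z, qf_sat (upd e x z) q -> le z0 z.
Proof.
move=> hb [y hy]; have [c [hc [_ hcq]]] := below_cooper_point hb hy.
have [c0 [_ [hc0 hmin]]] :=
  list_least (P := fun c => qf_sat (upd e x c) q) (ex_intro _ c (conj hc hcq)).
exists c0; split => // z hz; have [c' [hc' [hc'z hc'q]]] := below_cooper_point hb hz.
exact: (le_trans leZ) (hmin _ hc' hc'q) hc'z.
Qed.

End UnitCoefs.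

Definition cooper (q : qf) : qf :=
  QOr (qf_ors (List.map (fun j => qf_subst x (aff_const (one *+ j)) (qf_minf q))
                        (List.seq 0 (mod_lcm q))))
      (qf_ors (List.flat_map (fun l => List.map (fun j =>
                 qf_subst x (aff_add l (aff_const (one *+ j))) q)
                 (List.seq 0 (mod_lcm q))) (lower_bounds q))).

Lemma cooperP q e : unit_coefs x q ->
  qf_sat e (cooper q) <-> exists z, qf_sat (upd e x z) q.
Proof.
move=> hq; split.
  case=> /qf_sat_ors [p []]; last case/List.in_flat_map => l [hl].
    case/List.in_map_iff => j [<- _]; rewrite qf_sat_subst.
    by move=> /(qf_minf_unbounded hq) /(_ 0) [z [_ h]]; exists z.
  by case/List.in_map_iff => j [<- _]; rewrite qf_sat_subst => h; eexists; exact: h.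
move=> [z hz]; case: (cooper_witness hq hz) => [hm|[l [j [hl [hj [_ h]]]]]].
  have [k [j [hj ez]]] := zgroup_edivn z (mod_lcm_gt0 q).
  left; apply/qf_sat_ors; exists (qf_subst x (aff_const (one *+ j)) (qf_minf q)); split.
    by apply/List.in_map_iff; exists j; split => //; apply/In_seq0.
  rewrite qf_sat_subst /=.
  have -> : one *+ j = z + (- k) *+ mod_lcm q by rewrite ez mulNrn addrAC subrr add0r.
  by rewrite -qf_minf_periodic.
right; apply/qf_sat_ors; exists (qf_subst x (aff_add l (aff_const (one *+ j))) q); split.
  apply/List.in_flat_map; exists l; split => //.
  by apply/List.in_map_iff; exists j; split => //; apply/In_seq0.
by rewrite qf_sat_subst.
Qed.

End Cooper.

Definition qf_elim x p := cooper x (normalize x p).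

Lemma qf_elimP x p e : qf_sat e (qf_elim x p) <-> exists z, qf_sat (upd e x z) p.
Proof. by rewrite cooperP; [symmetry; exact: exists_normalize|exact: normalize_unit_coefs]. Qed.

Lemma qf_least_sol x p e b : (forall z, qf_sat (upd e x z) p -> le b z) ->
  (exists z, qf_sat (upd e x z) p) ->
  exists z0, qf_sat (upd e x z0) p /\ forall z, qf_sat (upd e x z) p -> le z0 z.
Proof.
move=> hb [z1 hz1]; set L := coef_lcm x p.
have hbL y : qf_sat (upd e x y) (normalize x p) -> le (b *+ L) y.
  move=> hy; have [z ez] := normalize_sol_mult hy.
  by rewrite ez; apply: (le_mulrn2r leZ); apply: hb; rewrite normalize_sat -ez.
have [|y0 [hy0 hmin]] := unit_coefs_least_sol (@normalize_unit_coefs x p) hbL.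
  by exists (z1 *+ L); rewrite -normalize_sat.
have [z0 ez0] := normalize_sol_mult hy0.
exists z0; split=> [|z /normalize_sat hz]; first by rewrite normalize_sat -ez0.
by move: (hmin _ hz); rewrite ez0 /L -(prednK (coef_lcm_gt0 x p)) => /(le_mulrSn2r leZ).
Qed.

(** * Definable predicates *)

Definition definable (P : env -> Prop) := exists p, forall e, P e <-> qf_sat e p.

Lemma definable_ext P Q : (forall e, P e <-> Q e) -> definable P -> definable Q.
Proof. by move=> h [p hp]; exists p => e; rewrite -h. Qed.

Lemma definable_true : definable (fun _ => True). Proof. by exists QTrue. Qed.
Lemma definable_false : definable (fun _ => False). Proof. by exists QFalse. Qed.

Lemma definable_and P Q : definable P -> definable Q -> definable (fun e => P e /\ Q e).
Proof. by move=> [p hp] [q hq]; exists (QAnd p q) => e; rewrite hp hq. Qed.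

Lemma definable_or P Q : definable P -> definable Q -> definable (fun e => P e \/ Q e).
Proof. by move=> [p hp] [q hq]; exists (QOr p q) => e; rewrite hp hq. Qed.

Lemma definable_not P : definable P -> definable (fun e => ~ P e).
Proof. by move=> [p hp]; exists (qf_neg p) => e; rewrite qf_sat_neg hp. Qed.

Lemma definable_ex x P : definable P -> definable (fun e => exists z, P (upd e x z)).
Proof.
move=> [p hp]; exists (qf_elim x p) => e; rewrite qf_elimP.
by split => -[z h]; exists z; apply/hp.
Qed.

Lemma definable_all x P : definable P -> definable (fun e => forall z, P (upd e x z)).
Proof.
move=> hP; apply: definable_ext (definable_not (definable_ex x (definable_not hP))) => e.
by split => h; [move=> z; apply: NNPP => hz; apply: h; exists z|move=> [z]; apply].
Qed.

Lemma definable_subst x (G : aff) P : definable P -> definable (fun e => P (upd e x (G e))).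
Proof. by move=> [p hp]; exists (qf_subst x G p) => e; rewrite qf_sat_subst. Qed.

Lemma definable_le (F G : aff) : definable (fun e => le (F e) (G e)).
Proof.
exists (QAtom (ALe (aff_add G (aff_opp F)))) => e.
by rewrite /qf_sat /= mulrN1z (subr_ge0 leZ).
Qed.

Lemma definable_eq (F G : aff) : definable (fun e => F e = G e).
Proof.
apply: definable_ext (definable_and (definable_le F G) (definable_le G F)) => e.
by split => [[]|->]; [exact: (le_anti leZ)|split; exact: (le_refl leZ)].
Qed.

Lemma definable_least (P : Z -> Prop) x b : definable (fun e => P (e x)) ->
  (forall z, P z -> le b z) -> (exists z, P z) ->
  exists z0, P z0 /\ forall z, P z -> le z0 z.
Proof.
move=> [p hp] hb [z hz]; pose e : env := fun _ => 0.
have hpx y : P y <-> qf_sat (upd e x y) p by rewrite -hp upd_eq.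
have hb' y : qf_sat (upd e x y) p -> le b y by move=> /hpx; apply: hb.
have hz' : exists y, qf_sat (upd e x y) p by exists z; apply/hpx.
have [z0 [/hpx hz0 hmin]] := qf_least_sol hb' hz'.
by exists z0; split => // y /hpx; apply: hmin.
Qed.

Lemma definable_ex_seq (T : eqType) (s : seq T) (P : T -> env -> Prop) :
  (forall t, definable (P t)) -> definable (fun e => exists2 t, t \in s & P t e).
Proof.
move=> hP; elim: s => [|t s IH].
  by apply: definable_ext definable_false => e; split => // -[].
apply: definable_ext (definable_or (hP t) IH) => e; split.
  by case=> [h|[t' ht' h]]; [exists t; rewrite ?mem_head|exists t'; rewrite ?in_cons ?ht' ?orbT].
by case=> t'; rewrite in_cons => /orP [/eqP ->|ht'] h; [left|right; exists t'].
Qed.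

Lemma definable_ex_fin (T : finType) (P : T -> env -> Prop) :
  (forall t, definable (P t)) -> definable (fun e => exists t, P t e).
Proof.
move=> /(definable_ex_seq (enum T)); apply: definable_ext => e.
by split=> [[t _ h]|[t h]]; exists t; rewrite ?mem_enum.
Qed.

Lemma definable_all_fin (T : finType) (P : T -> env -> Prop) :
  (forall t, definable (P t)) -> definable (fun e => forall t, P t e).
Proof.
move=> hP; have := definable_not (definable_ex_fin (fun t => definable_not (hP t))).
by apply: definable_ext => e; split => [h t|h [t]]; [apply: NNPP => ht; apply: h; exists t|].
Qed.

Definition override (a e : env) (K : nat) : env := fun j => if (j < K)%N then a j else e j.

Lemma definable_ex_prefix P K : definable P -> definable (fun e => exists a, P (override a e K)).
Proof.
move=> hP; elim: K => [|K IH].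
  by apply: definable_ext hP => e; split => [h|[a]]; [exists e|].
apply: definable_ext (definable_ex K IH) => e; split.
  move=> [z [a h]]; exists (upd a K z); move: h.
  have -> // : override a (upd e K z) K = override (upd a K z) e K.+1.
  apply: functional_extensionality => j; rewrite /override /upd ltnS.
  by case: (ltngtP j K).
move=> [a h]; exists (a K), a; move: h.
have -> // : override a e K.+1 = override a (upd e K (a K)) K.
apply: functional_extensionality => j; rewrite /override /upd ltnS.
by case: (ltngtP j K) => // ->.
Qed.

Definition zero_vars (b : nat -> bool) (K : nat) (e : env) : env :=
  fun j => if (j < K)%N && b j then 0 else e j.

Lemma definable_zero_vars P b K : definable P -> definable (fun e => P (zero_vars b K e)).
Proof.
move=> hP; elim: K => [|K IH].
  apply: definable_ext hP => e.
  by have -> : zero_vars b 0 e = e by apply: functional_extensionality.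
case hb: (b K).
  apply: definable_ext (definable_subst K (aff_const 0) IH) => e /=.
  have -> // : zero_vars b K (upd e K 0) = zero_vars b K.+1 e.
  apply: functional_extensionality => j; rewrite /zero_vars /upd ltnS.
  by case: (ltngtP j K) => [h|h|->] /=;
    rewrite ?(ltnW h) ?(ltn_eqF h) ?(gtn_eqF h) ?[(j <= K)%N]leqNgt ?h ?ltnn ?eqxx ?hb.
apply: definable_ext IH => e.
have -> // : zero_vars b K e = zero_vars b K.+1 e.
apply: functional_extensionality => j; rewrite /zero_vars ltnS.
by case: (ltngtP j K) => //= ->; rewrite hb.
Qed.

Fixpoint term_aff (t : pterm Z) : aff :=
  match t with
  | PVar i => aff_var i
  | PConst c => aff_const c
  | PZero => aff_const 0
  | POne => aff_const one
  | PAdd t u => aff_add (term_aff t) (term_aff u)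
  end.

Lemma term_affE t e : term_aff t e = teval one e t.
Proof. by elim: t => //= t IHt u IHu; rewrite IHt IHu. Qed.

Lemma definable_peval (phi : pform Z) : definable (fun e => peval le one e phi).
Proof.
elim: phi => /= [t u|t u|[|n] t u|p hp|p hp q hq|p hp q hq|i p hp|i p hp].
- by apply: definable_ext (definable_eq (term_aff t) (term_aff u)) => e; rewrite !term_affE.
- by apply: definable_ext (definable_le (term_aff t) (term_aff u)) => e; rewrite !term_affE.
- apply: definable_ext (definable_eq (term_aff t) (term_aff u)) => e; rewrite !term_affE.
  split=> [->|[y]]; first by exists 0; rewrite subrr.
  by rewrite mulr0n => /eqP; rewrite subr_eq0 => /eqP.
- exists (QAtom (ADvd n (aff_add (term_aff t) (aff_opp (term_aff u))))) => e.
  by rewrite /qf_sat /= mulrN1z !term_affE.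
- exact: (definable_not hp).
- exact: (definable_and hp hq).
- exact: (definable_or hp hq).
- exact: (definable_ex i hp).
- exact: (definable_all i hp).
Qed.

Fixpoint term_bound (t : pterm Z) : nat :=
  match t with PVar i => i.+1 | PAdd t u => maxn (term_bound t) (term_bound u) | _ => 0%N end.

Fixpoint form_bound (phi : pform Z) : nat :=
  match phi with
  | PEq t u | PLe t u | PCong _ t u => maxn (term_bound t) (term_bound u)
  | PNot p | PEx _ p | PAll _ p => form_bound p
  | PAnd p q | POr p q => maxn (form_bound p) (form_bound q)
  end.

Lemma teval_agree (e1 e2 : env) t : (forall j, (j < term_bound t)%N -> e1 j = e2 j) ->
  teval one e1 t = teval one e2 t.
Proof.
elim: t => //= [i|t IHt u IHu] h; first exact: h.
by rewrite IHt ?IHu // => j hj; apply: h; rewrite leq_max hj ?orbT.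
Qed.

Lemma peval_agree phi (e1 e2 : env) : (forall j, (j < form_bound phi)%N -> e1 j = e2 j) ->
  peval le one e1 phi <-> peval le one e2 phi.
Proof.
elim: phi e1 e2 => /= [t u|t u|n t u|p IH|p IHp q IHq|p IHp q IHq|i p IH|i p IH] e1 e2 h.
1-3: by rewrite (teval_agree (t := t) (e2 := e2)) ?(teval_agree (t := u) (e2 := e2)) //
       => j hj; apply: h; rewrite leq_max hj ?orbT.
- by rewrite (IH e1 e2).
1-2: by rewrite (IHp e1 e2) ?(IHq e1 e2) // => j hj; apply: h; rewrite leq_max hj ?orbT.
all: have he z : forall j, (j < form_bound p)%N -> upd e1 i z j = upd e2 i z j
       by move=> j hj; rewrite /upd; case: eqP => // _; exact: h.
- by split=> -[z hz]; exists z; move: hz; rewrite (IH _ _ (he z)).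
- by split=> hz z; move: (hz z); rewrite (IH _ _ (he z)).
Qed.

(** * The minimum of a largely continuous definable map *)

Section DivisibleHull.
Variables (Q : zmodType) (leQ : Q -> Q -> Prop) (iota : Z -> Q).
Hypothesis Hd : divhull le leQ iota.
Let leQ_oa := dh_oa Hd.

Lemma iota0 : iota 0 = 0.
Proof. by apply: (addrI (iota 0)); rewrite -(dh_add Hd) !addr0. Qed.

Lemma iotaN u : iota (- u) = - iota u.
Proof. by apply/eqP; rewrite -subr_eq0 opprK -(dh_add Hd) addNr iota0. Qed.

Lemma iota_inj : injective iota.
Proof.
move=> x y e; apply: (le_anti leZ); apply/(dh_le Hd); rewrite e; exact: (le_refl leQ_oa).
Qed.

Lemma iota_ub r : exists u, leQ r (iota u).
Proof.
have [k [k_gt0 [u hu]]] := dh_tors Hd r.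
case: (le_total leQ_oa r 0) => h; first by exists 0; rewrite iota0.
by exists u; rewrite -hu; apply: (le_mulrn_self leQ_oa).
Qed.

Lemma iota_lb w : exists t, leQ (iota t) w.
Proof.
have [u hu] := iota_ub (- w); exists (- u); rewrite iotaN.
by have := le_opp leQ_oa hu; rewrite opprK.
Qed.

Lemma iota_ray r : exists b, forall d, le (b + one) d -> ltrel leQ r (iota d).
Proof.
have [u hu] := iota_ub r; exists u => d hd.
have hud : le u d := le_trans leZ (le_add1 u) hd.
split; first exact: (le_trans leQ_oa hu (proj1 (dh_le Hd u d) hud)).
move=> e; apply: (not_add1_le (x := u)); apply: (le_trans leZ) hd _.
by apply/(dh_le Hd); rewrite -e.
Qed.

Lemma iota_one_gt0 : ltrel leQ 0 (iota one).
Proof.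
rewrite -iota0; split; first by apply/(dh_le Hd); exact: one_ge0.
by move=> /iota_inj /esym; exact: one_neq0.
Qed.

Lemma basic_nbhs_bounded_below (v : option Q) :
  exists V r, in_basic leQ V v /\ forall s, in_basic leQ V (Some s) -> ltrel leQ r s.
Proof.
case: v => [q|]; last by exists (BRay 0), 0.
have [d_ge0 d_neq0] := iota_one_gt0.
exists (BInt (q - iota one) (q + iota one)), (q - iota one).
split=> [|s []//]; split; split.
- by have := le_add2l leQ_oa q (le_opp leQ_oa d_ge0); rewrite oppr0 addr0.
- by move=> /eqP; rewrite -subr_eq0 addrAC subrr add0r oppr_eq0 => /eqP /esym.
- by have := le_add2l leQ_oa q d_ge0; rewrite addr0.
- by move=> /eqP; rewrite -subr_eq0 opprD addrA subrr add0r oppr_eq0 => /eqP /esym.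
Qed.

End DivisibleHull.

(* Besides the point (variables [0..m-1]) and the value of [n f] (variable [m]),
   formulas use the parameters [b], [t], [c] as variables [m.+1], [m.+2], [m.+3]. *)
Definition var_b (m : nat) := m.+1.
Definition var_t (m : nat) := m.+2.
Definition var_c (m : nat) := m.+3.

Lemma ltn_vars m : [/\ (m < var_b m)%N, (m < var_t m)%N & (m < var_c m)%N].
Proof. by split; rewrite /var_b /var_t /var_c; lia. Qed.

Lemma upd_bt_b m (e : env) t b : upd (upd e (var_t m) t) (var_b m) b (var_b m) = b.
Proof. by rewrite upd_eq. Qed.

Lemma upd_bt_t m (e : env) t b : upd (upd e (var_t m) t) (var_b m) b (var_t m) = t.
Proof. by rewrite upd_neq ?upd_eq // /var_t /var_b; apply/eqP; lia. Qed.

Lemma upd_bt_c m (e : env) t b : upd (upd e (var_t m) t) (var_b m) b (var_c m) = e (var_c m).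
Proof. by rewrite !upd_neq // /var_c /var_t /var_b; apply/eqP; lia. Qed.

Section Minimum.
Variables (Q : zmodType) (leQ : Q -> Q -> Prop) (iota : Z -> Q) (m : nat).
Variables (A : ('I_m -> option Z) -> Prop) (f : ('I_m -> option Z) -> option Q).
Hypothesis Hd : divhull le leQ iota.
Variable n : nat.
Hypothesis n_gt0 : (0 < n)%N.
Let leQ_oa := dh_oa Hd.

Definition nf_graph a z := A a /\ nmulO n (f a) = Some (iota z).

Definition nf_value z := exists a, nf_graph a z.

Lemma le_of_nmulO a b z w : nmulO n (f a) = Some (iota z) -> nmulO n (f b) = Some (iota w) ->
  le z w -> leO leQ (f a) (f b).
Proof.
case: (f a) (f b) => [s|] [s'|] //= [e] [e'] /(dh_le Hd); rewrite -e -e'.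
by rewrite -(prednK n_gt0) => /(le_mulrSn2r leQ_oa).
Qed.

(* A partial target [pc] prescribes, for some coordinates, a value of Gamma;
   [coord_near o b ai] says that [ai] equals a finite target, or exceeds [b]
   when the target is [+oo]. *)
Definition coord_near (o : option (option Z)) (b : Z) (ai : option Z) : Prop :=
  match o, ai with
  | Some (Some c), _ => ai = Some c
  | Some None, Some d => le (b + one) d
  | _, _ => True
  end.

Definition approx (pc : 'I_m -> option (option Z)) (b t : Z) a :=
  A a /\ (exists z, nmulO n (f a) = Some (iota z) /\ le z t) /\
  forall i, coord_near (pc i) b (a i).

Definition reachable pc := forall b t, exists a, approx pc b t a.

Definition set_target (pc : 'I_m -> option (option Z)) k o : 'I_m -> option (option Z) :=
  fun i => if i == k then Some o else pc i.

Lemma coord_near_mono o b b' ai : le b' b -> coord_near o b ai -> coord_near o b' ai.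
Proof. by case: o ai => [[c|]|] [d|] // hb; apply: (le_trans leZ); apply: (le_add2r leZ). Qed.

Lemma approx_mono pc b t b' t' a : le b' b -> le t t' -> approx pc b t a -> approx pc b' t' a.
Proof.
move=> hb ht [hA [[z [hz hzt]] hc]]; split => //; split.
  by exists z; split => //; exact: (le_trans leZ) hzt ht.
by move=> i; apply: coord_near_mono hb (hc i).
Qed.

Lemma approx_set_target pc k o b t a :
  approx pc b t a -> coord_near (Some o) b (a k) -> approx (set_target pc k o) b t a.
Proof.
move=> [hA [hz hc]] hk; split => //; split => // i; rewrite /set_target.
by case: (eqVneq i k) => [->|].
Qed.

Definition coord_bounded pc k c :=
  forall t b, exists a, approx pc b t a /\ exists d, a k = Some d /\ le d c.

Lemma not_coord_bounded pc k c : ~ coord_bounded pc k c ->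
  exists t b, forall a, approx pc b t a -> forall d, a k = Some d -> le (c + one) d.
Proof.
move=> hnot; apply: NNPP => hn; apply: hnot => t b; apply: NNPP => hn'; apply: hn.
exists t, b => a ha d hd; apply/not_le => hdc; apply: hn'.
by exists a; split => //; exists d.
Qed.

Lemma approx_common pc b t b' t' :
  exists b'' t'', forall a, approx pc b'' t'' a -> approx pc b t a /\ approx pc b' t' a.
Proof.
have [b'' [hb hb']] := le_max2 leZ b b'; have [t'' [ht ht']] := le_min2 leZ t t'.
by exists b'', t'' => a ha; split; apply: approx_mono ha.
Qed.

Section Definability.
Hypothesis nf_faces : forall I : {set 'I_m},
  (forall a, A a -> in_face I a -> nmulO n (f a) = None) \/
  ((forall a, A a -> in_face I a -> exists z, nmulO n (f a) = Some (iota z)) /\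
   exists phi : pform Z, forall x z, in_face I x ->
     ((A x /\ nmulO n (f x) = Some (iota z)) <-> peval le one (upd (envx x) m z) phi)).

Definition face_point (I : {set 'I_m}) (e : env) : 'I_m -> option Z :=
  fun i => if i \in I then Some (e i) else None.

Lemma face_point_in_face I e : in_face I (face_point I e).
Proof. by move=> i; rewrite /face_point; case: (i \in I). Qed.

Lemma definable_nf_graph I : definable (fun e => nf_graph (face_point I e) (e m)).
Proof.
case: (nf_faces I) => [hoo|[_ [phi hphi]]].
  apply: definable_ext definable_false => e; split => // -[hA].
  by rewrite (hoo _ hA (face_point_in_face I e)).
(* On the face [I], [phi] reads [e] with the variables outside [I] and beyond [m]
   set to [0]. *)
pose K := maxn (form_bound phi) m.+1.
pose b j := if @insub nat (fun k => (k < m)%N) 'I_m j is Some i then i \notin I else j != m.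
apply: definable_ext (definable_zero_vars b K (definable_peval phi)) => e.
rewrite /nf_graph (hphi _ _ (face_point_in_face I e)); apply: peval_agree => j hj.
rewrite /zero_vars (leq_trans hj (leq_maxl _ _)) /b /upd /envx.
case: (eqVneq j m) => [->|ne]; first by rewrite insubF ?ltnn.
by case: insubP => [i _ ei|] //=; rewrite /face_point; case: (i \in I) => //=; rewrite ei.
Qed.

(* A point of Gamma^m with a value in Z is encoded by its face and the
   variables [0..m], on which [R] must not otherwise depend. *)
Lemma definable_ex_point (R : ('I_m -> option Z) -> Z -> env -> Prop) :
  (forall I, definable (fun e => R (face_point I e) (e m) e)) ->
  (forall a z e e', (forall j, (m < j)%N -> e j = e' j) -> R a z e -> R a z e') ->
  definable (fun e => exists a z, R a z e).
Proof.
move=> hR hinv.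
have := definable_ex_fin (fun I => definable_ex_prefix m.+1 (hR I)).
apply: definable_ext => e; split.
  move=> [I [e' h]]; exists (face_point I (override e' e m.+1)), (override e' e m.+1 m).
  by apply: hinv h => j hj; rewrite /override ltnS leqNgt hj.
move=> [a [z h]]; exists [set i | isSome (a i)].
pose e' j := if j == m then z else
  if @insub nat (fun k => (k < m)%N) 'I_m j is Some i then odflt 0 (a i) else 0.
exists e'.
have -> : face_point [set i | isSome (a i)] (override e' e m.+1) = a.
  apply: functional_extensionality => i; rewrite /face_point inE /override ltnS.
  rewrite (ltnW (ltn_ord i)) /e' (ltn_eqF (ltn_ord i)) (insubT (fun k => (k < m)%N) (ltn_ord i)).
  have -> : Sub (val i) (ltn_ord i) = i by apply: val_inj.
  by case: (a i).
rewrite /override ltnSn /e' eqxx.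
by apply: hinv h => j hj; rewrite ltnS leqNgt hj.
Qed.

Lemma definable_coord_near o i I :
  definable (fun e => coord_near o (e (var_b m)) (face_point I e i)).
Proof.
rewrite /face_point; case: (i \in I); case: o => [[c|]|];
  try by [apply: definable_ext definable_true|apply: definable_ext definable_false].
- by apply: definable_ext (definable_eq (aff_var i) (aff_const c)) => e /=; split=> [->|[]].
- exact: definable_le (aff_add (aff_var (var_b m)) (aff_const one)) (aff_var i).
Qed.

Lemma definable_coord_bounded pc k : definable (fun e => coord_bounded pc k (e (var_c m))).
Proof.
pose R a z e := [/\ nf_graph a z, le z (e (var_t m)),
  forall i, coord_near (pc i) (e (var_b m)) (a i) & exists d, a k = Some d /\ le d (e (var_c m))].
have Dk I : definable (fun e => exists d, face_point I e k = Some d /\ le d (e (var_c m))).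
  rewrite /face_point; case: (k \in I); last first.
    by apply: definable_ext definable_false => e; split => // -[d []].
  apply: definable_ext (definable_le (aff_var k) (aff_var (var_c m))) => e /=.
  by split => [h|[d [[<-] h]]] //; exists (e k).
have DR : definable (fun e => exists a z, R a z e).
  apply: definable_ex_point => [I|a z e e' he [h1 h2 h3 h4]].
    apply: definable_ext (definable_and (definable_nf_graph I) (definable_and
      (definable_le (aff_var m) (aff_var (var_t m))) (definable_and
      (definable_all_fin (fun i => definable_coord_near (pc i) i I)) (Dk I)))) => e.
    by split=> [[? [? []]]|[]].
  by have [? ? ?] := ltn_vars m; rewrite /R -!he.
apply: definable_ext (definable_all (var_t m) (definable_all (var_b m) DR)) => e; split.
  move=> h t b; have [a [z []]] := h t b; rewrite upd_bt_b upd_bt_t upd_bt_c.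
  by move=> [hA hz] hzt hcn hd; exists a; split => //; split => //; split => //; exists z.
move=> h t b; have [a [[hA [[z [hz hzt]] hcn]] hd]] := h t b.
by exists a, z; rewrite /R upd_bt_b upd_bt_t upd_bt_c.
Qed.

Lemma definable_nf_value : definable (fun e => nf_value (e (var_c m))).
Proof.
have D : definable (fun e => exists a z, nf_graph a z /\ z = e (var_c m)).
  apply: definable_ex_point => [I|a z e e' he [h ez]].
    exact: (definable_and (definable_nf_graph I)
      (definable_eq (aff_var m) (aff_var (var_c m)))).
  by have [_ _ ?] := ltn_vars m; split => //; rewrite ez he.
apply: definable_ext D => e.
by split => [[a [z [h <-]]]|[a h]]; [exists a|exists a, (e (var_c m))].
Qed.

Lemma nf_value_least b : (forall z, nf_value z -> le b z) -> (exists z, nf_value z) ->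
  exists z0, nf_value z0 /\ forall z, nf_value z -> le z0 z.
Proof. exact: definable_least definable_nf_value. Qed.

Section NonNegative.
Hypothesis A_nonneg : nonneg le A.

Lemma coord_bounded_least pc k : (exists c, coord_bounded pc k c) ->
  exists c0, coord_bounded pc k c0 /\ ~ coord_bounded pc k (c0 - one).
Proof.
move=> [c hc].
have hb0 y : coord_bounded pc k y -> le 0 y.
  move=> hy; have [a [[hA _] [d [hd hdy]]]] := hy 0 0.
  by have := A_nonneg hA k; rewrite hd => h0; exact: (le_trans leZ) h0 hdy.
have [c0 [hc0 hmin]] := definable_least (definable_coord_bounded pc k) hb0 (ex_intro _ c hc).
exists c0; split => // /hmin /(le_add2r leZ one); rewrite subrK.
exact: not_add1_le.
Qed.

Lemma reachable_step pc k : reachable pc -> exists o, reachable (set_target pc k o).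
Proof.
move=> hR; case: (classic (exists c, coord_bounded pc k c)) => [hex|hn].
  have [c0 [hc0 /not_coord_bounded [t1 [b1 hc0']]]] := coord_bounded_least hex.
  exists (Some c0) => b t; have [b' [t' hbt]] := approx_common pc b t b1 t1.
  have [a [ha [d [hd hdc0]]]] := hc0 t' b'; have [hab ha1] := hbt a ha.
  exists a; apply: (approx_set_target hab); rewrite /= hd; congr Some.
  by apply: (le_anti leZ) hdc0 _; have := hc0' a ha1 d hd; rewrite subrK.
exists None => b t; have /not_coord_bounded [t1 [b1 hb1]] : ~ coord_bounded pc k b.
  by move=> hb; apply: hn; exists b.
have [b' [t' hbt]] := approx_common pc b t b1 t1.
have [a ha] := hR b' t'; have [hab ha1] := hbt a ha.
exists a; apply: (approx_set_target hab); rewrite /=; case hak: (a k) => [d|] //.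
exact: hb1 a ha1 d hak.
Qed.

Lemma reachable_total : reachable (fun _ => None) ->
  exists pc, reachable pc /\ forall i, pc i <> None.
Proof.
move=> h0.
suff [pc [hR hpc]] : exists pc, reachable pc /\ forall i, i \in enum 'I_m -> pc i <> None.
  by exists pc; split => // i; apply: hpc; rewrite mem_enum.
elim: (enum 'I_m) => [|k s [pc [hR hs]]]; first by exists (fun _ => None).
have [o hR'] := reachable_step k hR.
exists (set_target pc k o); split => // i; rewrite in_cons /set_target.
by case: (eqVneq i k) => //= _ /hs.
Qed.

End NonNegative.
End Definability.

Lemma reachable_of_unbounded : ~ (exists lb, forall z, nf_value z -> le lb z) ->
  reachable (fun _ => None).
Proof.
move=> hunb b t; apply: NNPP => hn; apply: hunb; exists t => z [a [Aa hz]].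
apply: NNPP => /not_le hzt; apply: hn; exists a; do 2!split => //; exists z; split => //.
exact: (le_trans leZ) (le_add1 z) hzt.
Qed.

Lemma least_value_minimizer a z0 :
  (forall b, A b -> nmulO n (f b) = None \/ exists z, nmulO n (f b) = Some (iota z)) ->
  nf_graph a z0 -> (forall z, nf_value z -> le z0 z) ->
  forall b, A b -> leO leQ (f a) (f b).
Proof.
move=> nf_val [_ ha] hmin b Ab; case: (nf_val b Ab) => [|[z hb]].
  by case: (f b) => //; case: (f a).
exact: (le_of_nmulO ha hb (hmin z (ex_intro _ b (conj Ab hb)))).
Qed.

Definition target (pc : 'I_m -> option (option Z)) : 'I_m -> option Q :=
  embO iota (fun i => odflt None (pc i)).

Lemma approx_in_box pc U : (forall i, pc i <> None) -> in_box leQ U (target pc) ->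
  exists b, forall t a, approx pc b t a -> in_box leQ U (embO iota a).
Proof.
move=> htot hU.
pose P i b := forall ai, coord_near (pc i) b ai -> in_basic leQ (U i) (omap iota ai).
have [b hb] : exists b, forall i, P i b.
  apply: (bound_forall_fin leZ) => [i b b' hbb' hb ai /(coord_near_mono hbb')|i].
    exact: hb.
  move: (hU i) (htot i); rewrite /P /target /embO; case: (pc i) => [[c|]|] //= hUi _.
    by exists 0 => ai ->.
  have [r hr] : exists r, U i = BRay r by move: hUi; case: (U i) => // r _; exists r.
  by have [b hb] := iota_ray Hd r; exists b; rewrite hr => -[d|] //= /hb.
by exists b => t a [_ [_ hc]] i; apply: hb.
Qed.

Lemma target_in_closure pc : reachable pc -> (forall i, pc i <> None) ->
  in_closure leQ iota A (target pc).
Proof.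
move=> hR htot U hU; have [b hb] := approx_in_box htot hU.
by have [a ha] := hR b 0; exists a; split; [case: ha|exact: hb _ _ ha].
Qed.

Section Continuity.
Variable g : ('I_m -> option Q) -> option Q.
Hypothesis g_ext : forall x, A x -> g (embO iota x) = f x.
Hypothesis g_cont : forall y, in_closure leQ iota A y ->
  forall V : basic Q, in_basic leQ V (g y) ->
  exists U : 'I_m -> basic Q, in_box leQ U y /\
    forall y', in_closure leQ iota A y' -> in_box leQ U y' -> in_basic leQ V (g y').

(* Near the target point [g] is bounded below, while [f] takes arbitrarily
   small values at points of [A] arbitrarily close to it. *)
Lemma reachable_total_false pc : reachable pc -> (forall i, pc i <> None) -> False.
Proof.
move=> hR htot.
have [V [r [hV hVr]]] := basic_nbhs_bounded_below Hd (g (target pc)).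
have [U [hU hUV]] := g_cont (target_in_closure hR htot) hV.
have [b hb] := approx_in_box htot hU.
have [t ht] := iota_lb Hd (r *+ n).
have [a ha] := hR b t; have [Aa [[z [hz hzt]] _]] := ha.
have a_cl : in_closure leQ iota A (embO iota a) by move=> U' hU'; exists a.
have := hUV _ a_cl (hb t a ha); rewrite g_ext //.
move: hz; case: (f a) => [s|] //= [hs] /hVr [hrs]; apply; apply: (le_anti leQ_oa hrs).
have : leQ (s *+ n) (r *+ n) by rewrite hs; apply: (le_trans leQ_oa) ht; apply/(dh_le Hd).
by rewrite -(prednK n_gt0) => /(le_mulrSn2r leQ_oa).
Qed.

End Continuity.
End Minimum.
End ZGroup.

Theorem lemma2p10 (Z : zmodType) (leZ : Z -> Z -> Prop) (one : Z)
  (Q : zmodType) (leQ : Q -> Q -> Prop) (iota : Z -> Q)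
  (m : nat) (A : ('I_m -> option Z) -> Prop) (f : ('I_m -> option Z) -> option Q) :
  zgroup leZ one ->
  divhull leZ leQ iota ->
  (exists a, A a) ->
  nonneg leZ A ->
  definable_set leZ one A ->
  definable_fun leZ one iota A f ->
  largely_continuous leQ iota A f ->
  exists a, A a /\ forall b, A b -> leO leQ (f a) (f b).
Proof.
move=> HZ Hd [a0 Aa0] Ann _ [n [n_gt0 [nf_val nf_faces]]] [g [g_ext g_cont]].
case: (classic (exists a, A a /\ f a <> None)) => [[a1 [Aa1 fa1]]|f_oo]; last first.
  exists a0; split=> // b Ab; suff -> : f b = None by case: (f a0).
  by apply: NNPP => fb; apply: f_oo; exists b.
have [z1 hz1] : exists z, nf_value iota A f n z.
  by case: (nf_val a1 Aa1) => [|[z hz]]; [case: (f a1) fa1|exists z, a1].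
case: (classic (exists lb, forall z, nf_value iota A f n z -> leZ lb z)) => [[lb hlb]|unbdd].
  have [z0 [[a ha] hmin]] := nf_value_least HZ nf_faces hlb (ex_intro _ z1 hz1).
  by exists a; split; [case: ha|exact: (least_value_minimizer Hd n_gt0 nf_val ha hmin)].
have [pc [hR htot]] := reachable_total HZ nf_faces Ann (reachable_of_unbounded HZ unbdd).
by case: (reachable_total_false HZ Hd n_gt0 g_ext g_cont hR htot).
Qed.
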